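(* Consider the nearest-neighbor graph $\mathcal{G}^\mu_{x(k)}$ for a positive integer $\mu$. The maximizing algorithm (in $\mathcal{A}_{\rm max}$) achieves global finite-time consensus within at most $\lceil n/\mu\rceil$ steps: for every initial time $k_0$ and initial value $x^0\in\mathbb{R}^n$, all $x_i(k_0+\lceil n/\mu\rceil)$ are equal.
   Context: Nodes $\mathcal{V}=\{1,\dots,n\}$, $n\ge3$, states $x_i(k)\in\mathbb{R}$, discrete time. The class $\mathcal{A}_{\rm max}$ is the update $x_i(k+1)=\max_{j\in\mathcal{N}_i(k)}x_j(k)$, where $\mathcal{N}_i(k)=\{i\}\cup\mathcal{N}_i^-(k)\cup\mathcal{N}_i^+(k)$. Nearest-neighbor graph $\mathcal{G}^\mu_{x(k)}$: $\mathcal{N}_i^-(k)$ is a set of $\min(\mu,|\{j:x_j(k)<x_i(k)\}|)$ nodes $j$ with $x_j(k)<x_i(k)$ whose values are closest to $x_i(k)$ among such nodes (ties broken arbitrarily), and $\mathcal{N}_i^+(k)$ is defined symmetrically from $\{j: x_j(k)>x_i(k)\}$. $\lceil z\rceil$ is the smallest integer not smaller than $z$. *)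

(* States are taken in an arbitrary real field R
   (the statement is order-theoretic; R = the reals is an instance). *)
From HB Require Import structures.
From mathcomp Require Import all_boot all_order all_algebra.
Set Implicit Arguments. Unset Strict Implicit. Unset Printing Implicit Defensive.
Import Order.TTheory GRing.Theory Num.Theory.
Local Open Scope ring_scope.

Section NN.
Variables (R : realFieldType) (n : nat).

Definition lower_set (x : 'I_n -> R) (i : 'I_n) : {set 'I_n} :=
  [set j | x j < x i].
Definition upper_set (x : 'I_n -> R) (i : 'I_n) : {set 'I_n} :=
  [set j | x i < x j].

(* S is a valid choice of N_i^-: min(mu, #lower) nodes with smaller value,
   whose values are closest to x_i among such nodes (ties arbitrary). *)
Definition is_lower_nn (mu : nat) (x : 'I_n -> R) (i : 'I_n)
    (S : {set 'I_n}) : Prop :=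
  [/\ S \subset lower_set x i,
      #|S| = minn mu #|lower_set x i|
    & forall j j', j \in S -> j' \in lower_set x i -> j' \notin S ->
        `|x i - x j| <= `|x i - x j'| ].

Definition is_upper_nn (mu : nat) (x : 'I_n -> R) (i : 'I_n)
    (S : {set 'I_n}) : Prop :=
  [/\ S \subset upper_set x i,
      #|S| = minn mu #|upper_set x i|
    & forall j j', j \in S -> j' \in upper_set x i -> j' \notin S ->
        `|x i - x j| <= `|x i - x j'| ].

(* max of x over a finite set N (containing i); the seed x i is
   harmless since i \in N. *)
Definition max_over (x : 'I_n -> R) (i : 'I_n) (N : {set 'I_n}) : R :=
  \big[Num.max/x i]_(j in N) x j.

(* One step of an algorithm in A_max on the graph G^mu_{x(k)}, for some
   admissible tie-breaking choice of the neighbor sets. *)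
Definition max_nn_step (mu : nat) (x x' : 'I_n -> R) : Prop :=
  forall i : 'I_n, exists Nm Np : {set 'I_n},
    [/\ is_lower_nn mu x i Nm, is_upper_nn mu x i Np
      & x' i = max_over x i (i |: (Nm :|: Np))].

End NN.

Definition ceil_div (a b : nat) : nat := (a + b.-1) %/ b.

From HB Require Import structures.
From mathcomp Require Import all_boot all_order all_algebra.
From mathcomp Require Import zify.
Import Order.TTheory GRing.Theory Num.Theory.
Set Implicit Arguments. Unset Strict Implicit.
Local Open Scope ring_scope.

(* Let M be the initial maximum, attained at a node jm.  A max-update never
   decreases a value and never exceeds M, so jm stays at M forever; what has
   to be counted is the set of nodes strictly below M.  The key local fact
   ([step_reaches_top]) is: a node i below M with fewer than mu nodes
   strictly between x_i and M has jm among its mu upper nearest neighbors or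
   a neighbor at level M, hence jumps to M.  Applying it to the node i0 of
   largest old value among those still below M after a step shows that at
   least mu nodes (those strictly between x_i0 and M) leave the set below M
   at each step ([step_shrinks_below]).  That set starts with at most n - 1
   nodes, so it is empty after any t steps with n - 1 <= t * mu
   ([consensus_after]); t = ceil(n / mu) is such a number
   ([ceil_div_mul_ge]), which gives [theorem9]. *)

Section OneStep.
Variables (R : realFieldType) (n mu : nat).
Implicit Types (y z : 'I_n -> R) (N : {set 'I_n}) (M : R).

Definition below y M : {set 'I_n} := [set j | y j < M].

Lemma max_over_ge y i N j : j \in N -> y j <= max_over y i N.
Proof.
move=> jN; rewrite /max_over (bigD1 j) //=.
by rewrite le_max lexx.
Qed.

Lemma max_over_le y i N M : (forall j, y j <= M) -> max_over y i N <= M.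
Proof.
move=> yM; rewrite /max_over.
by elim/big_ind: _ => // u v uM vM; rewrite ge_max uM vM.
Qed.

(* Every node is its own neighbor, so values never decrease. *)
Lemma step_nondecreasing y z i : max_nn_step mu y z -> y i <= z i.
Proof. by move=> /(_ i) [Nm [Np [_ _ ->]]]; apply: max_over_ge; rewrite setU11. Qed.

Lemma step_bounded y z M :
  max_nn_step mu y z -> (forall j, y j <= M) -> forall i, z i <= M.
Proof. by move=> step yM i; have [Nm [Np [_ _ ->]]] := step i; exact: max_over_le. Qed.

(* Otherwise
   all mu-or-fewer upper neighbors of i would lie strictly between y i and M,
   too few to exhaust the min(mu, #upper) slots, since jm is also above i. *)
Lemma step_reaches_top y z M jm i :
  max_nn_step mu y z -> (forall j, y j <= M) -> y jm = M ->
  (#|[set j | ((y i < y j) && (y j < M))%R]| < mu)%N -> M <= z i.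
Proof.
move=> step yM yjm small; have [Nm [Np [_ [Np_up Np_card _] zi]]] := step i.
rewrite leNgt; apply/negP => ziM.
set T := [set j | ((y i < y j) && (y j < M))%R] in small.
have Np_T : Np \subset T.
  apply/subsetP => j jNp; have := subsetP Np_up j jNp; rewrite !inE => -> /=.
  apply: le_lt_trans ziM; rewrite zi; apply: max_over_ge.
  by rewrite !inE jNp !orbT.
have jmT_up : jm |: T \subset upper_set y i.
  apply/subsetP => j; rewrite !inE => /orP [/eqP -> | /andP [-> _]] //.
  by rewrite yjm; apply: le_lt_trans ziM; apply: step_nondecreasing step.
have jm_notT : jm \notin T by rewrite inE yjm ltxx andbF.
move: (subset_leq_card Np_T) (subset_leq_card jmT_up).
rewrite cardsU1 jm_notT add1n Np_card.
move: #|upper_set _ _| #|T| small => up t; lia.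
Qed.

(* Take i0 of largest old value among the nodes still below
   M afterwards: by [step_reaches_top] at least mu nodes lie strictly between
   y i0 and M, and by the choice of i0 none of them is still below M. *)
Lemma step_shrinks_below y z M jm :
  max_nn_step mu y z -> (forall j, y j <= M) -> y jm = M ->
  (#|below z M| <= #|below y M| - mu)%N.
Proof.
move=> step yM yjm.
have [-> | [i1 zi1M]] := set_0Vmem (below z M); first by rewrite cards0.
rewrite inE in zi1M; case: (@arg_maxP _ _ _ i1 (fun j => z j < M) y zi1M).
move=> i0 zi0M i0_max.
set T := [set j | ((y i0 < y j) && (y j < M))%R].
have muT : (mu <= #|T|)%N.
  rewrite leqNgt; apply/negP => small.
  by have := step_reaches_top step yM yjm small; rewrite leNgt zi0M.
have below_sub : below z M \subset below y M.
  apply/subsetP => j; rewrite !inE; apply: le_lt_trans.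
  exact: step_nondecreasing step.
have T_left : T \subset below y M :\: below z M.
  apply/subsetP => j; rewrite !inE => /andP [i0j jM]; rewrite jM andbT.
  apply/negP => zjM; have ji0 := i0_max j zjM.
  by move: (lt_le_trans i0j ji0); rewrite ltxx.
move: (subset_leq_card T_left) (subset_leq_card below_sub).
rewrite cardsD (setIidPr below_sub).
move: #|below y M| #|below z M| #|T| muT => b c t; lia.
Qed.

End OneStep.

(* Consensus after any number t of steps with n - 1 <= t * mu: the values
   stay bounded by the initial maximum M, the maximizing node stays at M, and
   the set below M, of size at most n - 1 initially, loses mu nodes per step. *)
Lemma consensus_after (R : realFieldType) (n mu k0 t : nat)
    (x : nat -> 'I_n -> R) :
  (0 < n)%N -> (forall k, (k0 <= k)%N -> max_nn_step mu (x k) (x k.+1)) ->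
  (n.-1 <= t * mu)%N -> forall i j, x (k0 + t)%N i = x (k0 + t)%N j.
Proof.
move=> n_gt0 steps enough.
case: (@arg_maxP _ _ _ (Ordinal n_gt0) predT (x k0) isT) => jm _ jm_max.
set M := x k0 jm.
have inv s : [/\ forall j, x (k0 + s)%N j <= M, x (k0 + s)%N jm = M
   & (#|below (x (k0 + s)%N) M| <= n.-1 - s * mu)%N].
  elim: s => [|s [bounded top count]].
    rewrite addn0 mul0n subn0; split=> // [j|]; first exact: jm_max j isT.
    rewrite -[n in n.-1]card_ord -(cardsC1 jm); apply: subset_leq_card.
    by apply/subsetP => j; rewrite !inE; apply: contraTneq => ->; rewrite ltxx.
  have step : max_nn_step mu (x (k0 + s)%N) (x (k0 + s.+1)%N).
    by rewrite addnS; apply: steps; rewrite leq_addr.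
  split; first exact: step_bounded step bounded.
    apply/le_anti; rewrite (step_bounded step bounded) /= -{1}top.
    exact: step_nondecreasing step.
  by have := step_shrinks_below step bounded top; rewrite mulSn; lia.
have [bounded _ count] := inv t.
have at_top l : x (k0 + t)%N l = M.
  apply/le_anti; rewrite bounded /= leNgt; apply/negP => lM.
  have : (0 < #|below (x (k0 + t)%N) M|)%N by apply/card_gt0P; exists l; rewrite inE.
  lia.
by move=> i j; rewrite !at_top.
Qed.

Lemma ceil_div_mul_ge (n mu : nat) : (0 < mu)%N -> (n.-1 <= ceil_div n mu * mu)%N.
Proof.
move=> mu_gt0; rewrite /ceil_div.
have := divn_eq (n + mu.-1) mu; have := ltn_pmod (n + mu.-1) mu_gt0; lia.
Qed.

Theorem theorem9 (R : realFieldType) (n mu k0 : nat) (x : nat -> 'I_n -> R) :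
  (3 <= n)%N -> (0 < mu)%N ->
  (forall k : nat, (k0 <= k)%N -> max_nn_step mu (x k) (x k.+1)) ->
  forall i j : 'I_n, x (k0 + ceil_div n mu)%N i = x (k0 + ceil_div n mu)%N j.
Proof.
move=> n_ge3 mu_gt0 steps.
apply: consensus_after steps (ceil_div_mul_ge n mu_gt0).
exact: leq_trans n_ge3.
Qed.
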